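(* There is a formula $A$ of $\mathsf{LTL}^{\ll}$ such that for every formula $B$ of $\mathsf{LTL}$ we have $\mathcal{L}_A \neq \mathcal{L}_B$.
   Context: Fix a set $\mathsf{Prop}$ of atomic propositions. Formulas of $\mathsf{LTL}^{\ll}$ are built from atomic propositions $P \in \mathsf{Prop}$ by $\lnot A$, $A \land B$, $\mathsf{X} A$, $A \mathbin{\mathsf{U}} B$ and $A \ll B$; formulas of $\mathsf{LTL}$ are those not containing $\ll$. A model $\sigma$ is an $\omega$-word $\sigma_0\sigma_1\sigma_2\ldots$ of sets of atomic propositions. Satisfaction is defined by: $\sigma,i \models P$ iff $P \in \sigma_i$; $\sigma,i\models \lnot A$ iff not $\sigma,i\models A$; $\sigma,i\models A\land B$ iff both hold; $\sigma,i\models \mathsf{X}A$ iff $\sigma,i+1\models A$; $\sigma,i\models A\mathbin{\mathsf{U}}B$ iff there is $j\ge i$ with $\sigma,j\models B$ and $\sigma,k\models A$ for all $i\le k<j$; $\sigma,i\models A\ll B$ iff for every $b$ there exists $j$ with $\mathrm{card}(A_\sigma^{i,j}) + b \le \mathrm{card}(B_\sigma^{i,j})$, where $A_\sigma^{i,j} := \{k \in \mathbb{N} : i \le k \le j,\ \sigma,k\models A\}$ (quantifiers over $b$, $j$ range over natural numbers). For a formula $A$ whose atomic propositions are $P_1,\dots,P_n$, its language is the $\omega$-language $\mathcal{L}_A := \{\sigma \in \Sigma^\omega : \sigma,0\models A\}$ over the alphabet $\Sigma := 2^{\{P_1,\dots,P_n\}}$. *)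

From Stdlib Require Import Arith List ClassicalEpsilon.
Import ListNotations.

Section LTLll.
Variable AP : Type.

Inductive formula : Type :=
  | FAtom : AP -> formula
  | FNot : formula -> formula
  | FAnd : formula -> formula -> formula
  | FX : formula -> formula
  | FU : formula -> formula -> formula
  | FLl : formula -> formula -> formula.

Fixpoint isLTL (A : formula) : Prop :=
  match A with
  | FAtom _ => True
  | FNot A => isLTL A
  | FAnd A B => isLTL A /\ isLTL B
  | FX A => isLTL A
  | FU A B => isLTL A /\ isLTL B
  | FLl _ _ => False
  end.

Fixpoint atoms (A : formula) : list AP :=
  match A with
  | FAtom p => [p]
  | FNot A => atoms A
  | FAnd A B => atoms A ++ atoms B
  | FX A => atoms A
  | FU A B => atoms A ++ atoms B
  | FLl A B => atoms A ++ atoms B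
  end.

(* A model: an omega-word of sets of atomic propositions;
   sigma i p = true  iff  p \in sigma_i *)
Definition word := nat -> AP -> bool.

Definition card_between (P : nat -> Prop) (i j : nat) : nat :=
  fold_right (fun k acc => (if excluded_middle_informative (P k) then 1 else 0) + acc)
    0 (seq i (S j - i)).

Fixpoint sat (s : word) (A : formula) (i : nat) : Prop :=
  match A with
  | FAtom p => s i p = true
  | FNot A => ~ sat s A i
  | FAnd A B => sat s A i /\ sat s B i
  | FX A => sat s A (S i)
  | FU A B => exists j, i <= j /\ sat s B j /\ (forall k, i <= k < j -> sat s A k)
  | FLl A B => forall b : nat, exists j : nat,
      card_between (sat s A) i j + b <= card_between (sat s B) i j
  end.

(* L_A : omega-words over the alphabet 2^{atoms of A} satisfying A at 0 *)
Definition lang (A : formula) (s : word) : Prop :=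
  (forall i p, s i p = true -> In p (atoms A)) /\ sat s A 0.

End LTLll.

Arguments FAtom {AP}. Arguments FNot {AP}. Arguments FAnd {AP}.
Arguments FX {AP}. Arguments FU {AP}. Arguments FLl {AP}.
Arguments isLTL {AP}. Arguments atoms {AP}. Arguments sat {AP}. Arguments lang {AP}.

(** The witness is [p << ~p].  Let [N] exceed the nesting depth of [X] in an
    LTL formula [B], and compare the periodic words [(p^N (~p)^(N+1))^omega] and
    [(p^(N+1) (~p)^N)^omega].  Two positions carrying the same letter, whose
    current runs have the same remaining length up to a threshold [K <= N],
    satisfy the same LTL formulas of [X]-depth below [K]: an [X] lowers the
    threshold by one, and a [U]-witness in one word is tracked in the other by
    letting one side stutter inside a long run.  So [B] cannot tell the two
    words apart, whereas [p << ~p] holds on the first one (each period puts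
    [~p] one position further ahead) and fails on the second (where [p] is
    never behind). *)
From Stdlib Require Import Arith List ClassicalEpsilon Lia.

Fixpoint next_depth {AP} (B : formula AP) : nat :=
  match B with
  | FAtom _ => 0
  | FNot A => next_depth A
  | FX A => S (next_depth A)
  | FAnd A C | FU A C | FLl A C => max (next_depth A) (next_depth C)
  end.

Definition holds_until (F P : nat -> Prop) (i : nat) : Prop :=
  exists w, i <= w /\ P w /\ (forall k, i <= k < w -> F k).

Definition word_of {AP} (l : bool -> AP -> bool) (t : nat -> bool) : word AP :=
  fun i => l (t i).

(* [r i] is what remains at [i] of the current run of [t], position [i] included;
   every run but the first has length at least [N]. *)
Definition long_runs (N : nat) (t : nat -> bool) (r : nat -> nat) : Prop :=
  forall i, 1 <= r i /\
    (2 <= r i -> t (S i) = t i /\ r (S i) = r i - 1) /\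
    (r i = 1 -> t (S i) = negb (t i) /\ N <= r (S i)).

Lemma long_runs_step {N t r} (runs : long_runs N t r) i :
  (r i = 1 /\ t (S i) = negb (t i) /\ N <= r (S i)) \/
  (2 <= r i /\ t (S i) = t i /\ r (S i) = r i - 1).
Proof.
  destruct (runs i) as (Hpos & Hlong & Hlast).
  destruct (Nat.eq_dec (r i) 1) as [Hr | Hr].
  - left; split; [exact Hr | exact (Hlast Hr)].
  - right; split; [lia | apply Hlong; lia].
Qed.

Definition agree (K : nat) (t1 : nat -> bool) (r1 : nat -> nat)
    (t2 : nat -> bool) (r2 : nat -> nat) (i j : nat) : Prop :=
  t1 i = t2 j /\ min (r1 i) K = min (r2 j) K.

Lemma agree_sym K t1 r1 t2 r2 i j :
  agree K t1 r1 t2 r2 i j -> agree K t2 r2 t1 r1 j i.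
Proof. unfold agree; intros [? ?]; split; congruence. Qed.

Section Stuttering.

Variables (N : nat) (t1 t2 : nat -> bool) (r1 r2 : nat -> nat).
Hypotheses (runs1 : long_runs N t1 r1) (runs2 : long_runs N t2 r2).

Local Notation similar K := (agree K t1 r1 t2 r2).

Lemma agree_next K i j :
  1 <= K -> S K <= N -> similar (S K) i j -> similar K (S i) (S j).
Proof.
  unfold agree; intros HK HKN [Ht Hr].
  destruct (long_runs_step runs1 i) as [(? & ? & ?) | (? & ? & ?)],
           (long_runs_step runs2 j) as [(? & ? & ?) | (? & ? & ?)];
  first [ split; [congruence | lia] | exfalso; lia ].
Qed.

(* The last alternative, where only the second word moves, occurs inside two long runs
   of different lengths; it shortens the run of the second word, so it cannot recur
   forever. *)
Lemma agree_cases K i j : 1 <= K <= N -> similar K i j ->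
  similar K (S i) (S j) \/ similar K (S i) j \/
  (similar K i (S j) /\ r2 (S j) < r2 j).
Proof.
  unfold agree; intros HK [Ht Hr].
  destruct (long_runs_step runs1 i) as [(? & ? & ?) | (? & ? & ?)],
           (long_runs_step runs2 j) as [(? & ? & ?) | (? & ? & ?)];
  destruct (lt_eq_lt_dec (r1 i) (r2 j)) as [[lt|eq]|gt];
  first [ left; split; [congruence | lia]
        | right; left; split; [congruence | lia]
        | right; right; split; [split; [congruence | lia] | lia]
        | exfalso; lia ].
Qed.

Lemma agree_advance K i j : 1 <= K <= N -> similar K i j ->
  exists j', j <= j' /\ similar K (S i) j' /\ (forall k, j <= k < j' -> similar K i k).
Proof.
  intros HK.
  remember (r2 j) as n eqn:En; revert j En.
  induction n as [n IH] using lt_wf_ind; intros j En Hij.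
  destruct (agree_cases K i j HK Hij) as [Hnext | [Hstay | [Hstutter Hlt]]].
  - exists (S j); split; [lia | split; [exact Hnext |]].
    intros k Hk; replace k with j by lia; exact Hij.
  - exists j; split; [lia | split; [exact Hstay | intros; lia]].
  - destruct (IH (r2 (S j)) ltac:(lia) (S j) eq_refl Hstutter) as [j' [Hj' [Hsim Hbetween]]].
    exists j'; split; [lia | split; [exact Hsim |]].
    intros k Hk; destruct (Nat.eq_dec k j) as [->|]; [exact Hij | apply Hbetween; lia].
Qed.

Lemma until_agree K (F1 P1 F2 P2 : nat -> Prop) : 1 <= K <= N ->
  (forall i j, similar K i j -> F1 i -> F2 j) ->
  (forall i j, similar K i j -> P1 i -> P2 j) ->
  forall i j, similar K i j -> holds_until F1 P1 i -> holds_until F2 P2 j.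
Proof.
  intros HK HF HP i j Hij [w [Hiw [Pw Fw]]].
  remember (w - i) as d eqn:Ed; revert i j Hij Hiw Fw Ed.
  induction d as [|d IH]; intros i j Hij Hiw Fw Ed.
  - exists j; split; [lia | split; [apply (HP i); [exact Hij | now replace i with w by lia] | intros; lia]].
  - destruct (agree_advance K i j HK Hij) as [j' [Hjj' [Hsim Hbetween]]].
    destruct (IH (S i) j' Hsim ltac:(lia) ltac:(intros; apply Fw; lia) ltac:(lia))
      as [w' [Hw' [Pw' Fw']]].
    exists w'; split; [lia | split; [exact Pw' |]].
    intros k Hk; destruct (le_lt_dec j' k).
    + apply Fw'; lia.
    + apply (HF i k); [apply Hbetween; lia | apply Fw; lia].
Qed.

End Stuttering.

Lemma sat_agree {AP} (l : bool -> AP -> bool) N t1 r1 t2 r2 (B : formula AP) :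
  isLTL B -> long_runs N t1 r1 -> long_runs N t2 r2 ->
  forall K i j, next_depth B < K -> K <= N -> agree K t1 r1 t2 r2 i j ->
  (sat (word_of l t1) B i <-> sat (word_of l t2) B j).
Proof.
  intros HB runs1 runs2.
  induction B as [p | B IH | B1 IH1 B2 IH2 | B IH | B1 IH1 B2 IH2 | B1 _ B2 _];
    simpl in *; intros K i j HK HKN Hij.
  - unfold word_of; destruct Hij as [-> _]; reflexivity.
  - rewrite (IH HB K i j HK HKN Hij); reflexivity.
  - destruct HB as [HB1 HB2].
    rewrite (IH1 HB1 K i j ltac:(lia) HKN Hij), (IH2 HB2 K i j ltac:(lia) HKN Hij).
    reflexivity.
  - destruct K as [|K]; [lia |].
    apply (IH HB K); [lia | lia | apply (agree_next N t1 t2 r1 r2); auto; lia].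
  - destruct HB as [HB1 HB2].
    split.
    + apply (until_agree N t1 t2 r1 r2 runs1 runs2 K); [lia | | | exact Hij];
        intros i' j' Hsim; [apply (IH1 HB1 K) | apply (IH2 HB2 K)]; auto; lia.
    + apply (until_agree N t2 t1 r2 r1 runs2 runs1 K); [lia | | | now apply agree_sym];
        intros i' j' Hsim%agree_sym; [apply (IH1 HB1 K) | apply (IH2 HB2 K)]; auto; lia.
  - contradiction.
Qed.

Definition step (a b : nat) (x : bool * nat * nat) : bool * nat * nat :=
  let '(ph, r, c) := x in
  if r =? 1 then (if ph then (false, b, c) else (true, a, S c)) else (ph, r - 1, c).

(* The state at time [n] of the word [(p^a (~p)^b)^omega]: the current letter,
   what remains of the current run, and the number of completed periods. *)
Definition state (a b n : nat) : bool * nat * nat := Nat.iter n (step a b) (true, a, 0).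
Definition phase (a b n : nat) : bool := fst (fst (state a b n)).
Definition remaining (a b n : nat) : nat := snd (fst (state a b n)).

Fixpoint count_below (P : nat -> Prop) (n : nat) : nat :=
  match n with
  | 0 => 0
  | S n => count_below P n + (if excluded_middle_informative (P n) then 1 else 0)
  end.

Lemma count_below_S_true (P : nat -> Prop) n :
  P n -> count_below P (S n) = count_below P n + 1.
Proof. intros Hn; simpl; destruct excluded_middle_informative; tauto. Qed.

Lemma count_below_S_false (P : nat -> Prop) n :
  ~ P n -> count_below P (S n) = count_below P n.
Proof. intros Hn; simpl; destruct excluded_middle_informative; [tauto | lia]. Qed.

Lemma count_below_ext (P Q : nat -> Prop) n :
  (forall k, P k <-> Q k) -> count_below P n = count_below Q n.
Proof.
  intros HPQ; induction n as [|n IH]; [reflexivity |]; simpl; rewrite IH.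
  do 2 destruct excluded_middle_informative; firstorder.
Qed.

Lemma card_between_0 (P : nat -> Prop) j : card_between P 0 j = count_below P (S j).
Proof.
  unfold card_between; rewrite Nat.sub_0_r.
  assert (shift : forall l x,
    fold_right (fun k acc => (if excluded_middle_informative (P k) then 1 else 0) + acc) x l =
    fold_right (fun k acc => (if excluded_middle_informative (P k) then 1 else 0) + acc) 0 l + x).
  { induction l as [|y l IH]; intros x; simpl; [reflexivity | rewrite IH; lia]. }
  induction (S j) as [|n IH]; [reflexivity |].
  rewrite seq_S, fold_right_app; simpl; rewrite shift, IH; lia.
Qed.

Section Periodic.

Variables a b : nat.
Hypotheses (a_pos : 1 <= a) (b_pos : 1 <= b).

Local Notation pos n := (count_below (fun k => phase a b k = true) n).
Local Notation neg n := (count_below (fun k => phase a b k = false) n).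

Lemma state_counts n ph r c : state a b n = (ph, r, c) ->
  if ph then 1 <= r <= a /\ pos n + r = S c * a /\ neg n = c * b
  else 1 <= r <= b /\ pos n = S c * a /\ neg n + r = S c * b.
Proof.
  revert ph r c; induction n as [|n IH]; intros ph r c Hst.
  - injection Hst as <- <- <-; simpl; lia.
  - destruct (state a b n) as [[ph0 r0] c0] eqn:E.
    specialize (IH ph0 r0 c0 eq_refl).
    assert (Hph : phase a b n = ph0) by (unfold phase; rewrite E; reflexivity).
    change (state a b (S n)) with (step a b (state a b n)) in Hst.
    rewrite E in Hst; unfold step in Hst.
    destruct ph0.
    + rewrite count_below_S_true, (count_below_S_false _ n) by congruence.
      destruct (Nat.eqb_spec r0 1); injection Hst as <- <- <-; lia.
    + rewrite count_below_S_false, (count_below_S_true _ n) by congruence.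
      destruct (Nat.eqb_spec r0 1); injection Hst as <- <- <-; simpl in *; lia.
Qed.

Lemma long_runs_phase N : N <= a -> N <= b -> long_runs N (phase a b) (remaining a b).
Proof.
  intros Ha Hb n; unfold phase, remaining.
  change (state a b (S n)) with (step a b (state a b n)).
  pose proof (state_counts n) as Hc.
  destruct (state a b n) as [[ph r] c]; specialize (Hc ph r c eq_refl).
  unfold step; destruct (Nat.eqb_spec r 1), ph; simpl; intuition lia.
Qed.

Lemma iter_step_run r ph c : 1 <= r ->
  Nat.iter r (step a b) (ph, r, c) = if ph then (false, b, c) else (true, a, S c).
Proof.
  revert ph c; induction r as [|r IH]; intros ph c Hr; [lia |].
  destruct r as [|r]; [destruct ph; reflexivity |].
  rewrite Nat.iter_succ_r; simpl (step a b _).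
  apply IH; lia.
Qed.

Lemma state_period k : state a b (k * (a + b)) = (true, a, k).
Proof.
  induction k as [|k IH]; [reflexivity |].
  replace (S k * (a + b)) with (b + (a + k * (a + b))) by lia.
  unfold state in *; rewrite !Nat.iter_add, IH, !iter_step_run by lia.
  reflexivity.
Qed.

Lemma neg_le_pos n : b <= a -> neg n <= pos n.
Proof.
  intros Hba; pose proof (state_counts n) as Hc.
  destruct (state a b n) as [[ph r] c]; specialize (Hc ph r c eq_refl).
  destruct ph; nia.
Qed.

Lemma neg_ahead_unbounded m : b = S a -> exists n, pos (S n) + m <= neg (S n).
Proof.
  intros Hb; exists (S m * (a + b) - 1).
  replace (S (S m * (a + b) - 1)) with (S m * (a + b)) by lia.
  destruct (state_counts _ _ _ _ (state_period (S m))) as (_ & Hpos & Hneg).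
  assert (S m * b = S m * a + S m) by (rewrite Hb; lia).
  lia.
Qed.

End Periodic.

Definition letter {AP} (p0 : AP) (v : bool) (q : AP) : bool :=
  if excluded_middle_informative (q = p0) then v else false.

Lemma letter_eq {AP} (p0 : AP) v : letter p0 v p0 = v.
Proof. unfold letter; destruct excluded_middle_informative; congruence. Qed.

Lemma letter_true {AP} (p0 q : AP) v : letter p0 v q = true -> q = p0.
Proof. unfold letter; destruct excluded_middle_informative; congruence. Qed.

Lemma sat_letter_ll {AP} (p0 : AP) t :
  sat (word_of (letter p0) t) (FLl (FAtom p0) (FNot (FAtom p0))) 0 <->
  forall m, exists j,
    count_below (fun k => t k = true) (S j) + m <= count_below (fun k => t k = false) (S j).
Proof.
  assert (Hpos : forall j, card_between (sat (word_of (letter p0) t) (FAtom p0)) 0 j =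
                           count_below (fun k => t k = true) (S j)).
  { intros j; rewrite card_between_0; apply count_below_ext; intros k.
    simpl; unfold word_of; rewrite letter_eq; reflexivity. }
  assert (Hneg : forall j, card_between (sat (word_of (letter p0) t) (FNot (FAtom p0))) 0 j =
                           count_below (fun k => t k = false) (S j)).
  { intros j; rewrite card_between_0; apply count_below_ext; intros k.
    simpl; unfold word_of; rewrite letter_eq, Bool.not_true_iff_false; reflexivity. }
  split; intros H m; destruct (H m) as [j Hj]; exists j.
  - rewrite <- Hpos, <- Hneg; exact Hj.
  - rewrite Hpos, Hneg; exact Hj.
Qed.

Theorem mainTheorem2 (AP : Type) (p0 : AP) :
  exists A : formula AP,
    forall B : formula AP, isLTL B ->
      ~ (forall s : word AP, lang A s <-> lang B s).
Proof.
  exists (FLl (FAtom p0) (FNot (FAtom p0))).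
  intros B HB Hlang.
  set (N := S (next_depth B)).
  assert (L1 : lang (FLl (FAtom p0) (FNot (FAtom p0))) (word_of (letter p0) (phase N (S N)))).
  { split.
    - intros i q ->%letter_true; left; reflexivity.
    - apply sat_letter_ll; intros m; apply neg_ahead_unbounded; unfold N; lia. }
  apply Hlang in L1 as [atoms_B sat_B].
  assert (L2 : lang B (word_of (letter p0) (phase (S N) N))).
  { split.
    - intros i q ->%letter_true; apply (atoms_B 0); unfold word_of; apply letter_eq.
    - assert (runs1 : long_runs N (phase N (S N)) (remaining N (S N)))
        by (apply long_runs_phase; unfold N; lia).
      assert (runs2 : long_runs N (phase (S N) N) (remaining (S N) N))
        by (apply long_runs_phase; unfold N; lia).
      refine (proj1 (sat_agree _ _ _ _ _ _ B HB runs1 runs2 N 0 0 _ _ _) sat_B);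
        [unfold N; lia | lia | split; [reflexivity | change (min N N = min (S N) N); lia]]. }
  apply Hlang, proj2 in L2.
  destruct (proj1 (sat_letter_ll p0 _) L2 1) as [j Hj].
  pose proof (neg_le_pos (S N) N ltac:(lia) ltac:(unfold N; lia) (S j) ltac:(lia)).
  lia.
Qed.
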